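(* Let $\tau = \{t \mid t \subseteq \Omega \}$, $\tau_{b} = \{t \mid \emptyset \neq t \subseteq \Omega, I_{\phi(t,f)} \geq b \}$, and $\phi$ a decomposable probability-of-success metric. Then for $b \geq 3$, \[ \frac{|\tau_{b}|}{|\tau|} \leq 2^{-b}. \]
   Context: Algorithmic search framework: finite discrete search space $\Omega$, target set $t\subseteq\Omega$ with indicator vector $\mathbf{t}$, fixed information resource $f$, and a search algorithm $\mathcal{A}$. A probability-of-success metric $\phi$ is decomposable if there exists a probability vector $\mathbf{P}_{\phi,f}$ over $\Omega$, not a function of $t$, with $\phi(t,f)=\mathbf{t}^{\top}\mathbf{P}_{\phi,f}=P_\phi(X\in t\mid f)$. The active information of expectations is $I_{\phi(t,f)} := -\log_2\frac{p}{\phi(t,f)}$, where $p=|t|/|\Omega|$ is the per-query success probability of uniform random sampling with replacement. *)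

From HB Require Import structures.
From mathcomp Require Import all_boot all_order all_algebra.
From mathcomp Require Import all_classical all_reals exp.
Set Implicit Arguments. Unset Strict Implicit. Unset Printing Implicit Defensive.
Import Order.TTheory GRing.Theory Num.Theory.
Local Open Scope ring_scope.

Definition log2 (R : realType) (x : R) : R := ln x / ln 2.

Definition prob_vector (R : realType) (Omega : finType) (P : Omega -> R) : Prop :=
  (forall x, 0 <= P x) /\ \sum_(x : Omega) P x = 1.

(* phi (the information resource f being fixed) is decomposable:
   phi(t) = t^T P for a probability vector P not depending on t. *)
Definition decomposable (R : realType) (Omega : finType) (phi : {set Omega} -> R) : Prop :=
  exists P : Omega -> R, prob_vector P /\ forall t : {set Omega}, phi t = \sum_(x in t) P x.

Definition unif_prob (R : realType) (Omega : finType) (t : {set Omega}) : R :=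
  #|t|%:R / #|Omega|%:R.

Definition active_info (R : realType) (Omega : finType) (phi : {set Omega} -> R)
  (t : {set Omega}) : R := - log2 (unif_prob R t / phi t).

Definition tau_b (R : realType) (Omega : finType) (phi : {set Omega} -> R) (b : R)
  : {set {set Omega}} := [set t : {set Omega} | (t != finset.set0) && (b <= active_info phi t)].

From mathcomp Require Import all_boot all_order all_algebra.
From mathcomp Require Import all_classical all_reals exp.
From mathcomp Require Import fingroup perm.
Import Order.TTheory GRing.Theory Num.Theory.
Local Open Scope ring_scope.

(* For a decomposable phi, the ratio phi(t) / p(t) has mean at most 1 when t
   is drawn uniformly from the subsets of Omega: writing phi(t) = sum_(x in t) P x,
   the mean is a P-average of the quantities |Omega| sum_(t ∋ x) 1 / |t|, which do not
   depend on x by symmetry and sum over x to the number of nonempty subsets.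
   Since I_phi(t,f) >= b means phi(t) / p(t) >= 2^b, Markov's inequality gives
   |tau_b| <= 2^-b |tau|; only b > 0 is needed. *)

Section Markov.
Context {R : realFieldType} {T : finType}.

Lemma markov_card (g : T -> R) (c : R) : (forall t, 0 <= g t) ->
  c * #|[set t | c <= g t]|%:R <= \sum_t g t.
Proof.
move=> g_ge0; rewrite -sumr_const mulr_sumr.
apply: (le_trans (y := \sum_(t in [set t | c <= g t]) g t)).
  by apply: ler_sum => t; rewrite inE mulr1.
by rewrite [leRHS](bigID (mem [set t | c <= g t])) /= lerDl sumr_ge0.
Qed.

End Markov.

Section Log2.
Context {R : realType}.

Lemma log2V (x : R) : log2 x^-1 = - log2 x.
Proof.
rewrite /log2; have [x_gt0|x_le0] := ltP 0 x; first by rewrite lnV ?posrE // mulNr.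
by rewrite (ln0 x_le0) ln0 ?invr_le0 // mul0r oppr0.
Qed.

Lemma powR2_le_of_log2_ge (x b : R) : 0 < b -> b <= log2 x -> powR 2 b <= x.
Proof.
move=> b_gt0 b_le; have ln2_gt0 : 0 < ln (2 : R) by rewrite ln_gt0 ?ltr1n.
have x_gt0 : 0 < x.
  rewrite ltNge; apply/negP => x_le0.
  by move: b_le; rewrite /log2 ln0 // mul0r leNgt b_gt0.
by rewrite -ler_ln ?posrE ?powR_gt0 // ln_powR -ler_pdivlMr.
Qed.

End Log2.

Section SubsetAverage.
Context {R : realType} {Omega : finType}.

Definition inv_card_sum (x : Omega) : R :=
  \sum_(t : {set Omega} | x \in t) #|t|%:R^-1.

Lemma inv_card_sum_const (x y : Omega) : inv_card_sum x = inv_card_sum y.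
Proof.
rewrite /inv_card_sum.
have preimK : involutive (fun t : {set Omega} => tperm x y @^-1: t).
  by move=> t; apply/setP => z; rewrite !inE tpermK.
rewrite (reindex_inj (inv_inj preimK)) /=.
apply: eq_big => [t | t _]; first by rewrite inE tpermL.
by rewrite card_preimset //; apply: perm_inj.
Qed.

Lemma sum_inv_card_sum : \sum_x inv_card_sum x <= #|{set Omega}|%:R.
Proof.
rewrite /inv_card_sum (exchange_big_dep xpredT) //= -sumr_const.
apply: ler_sum => t _; rewrite sumr_const.
have [->|t_neq0] := eqVneq #|t| 0%N; first by rewrite mulr0n ler01.
by rewrite -(mulr_natr #|t|%:R^-1) mulVf ?pnatr_eq0.
Qed.

Lemma sum_mass_div_card (P : Omega -> R) :
  \sum_(t : {set Omega}) (\sum_(x in t) P x) / #|t|%:R =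
  \sum_x P x * inv_card_sum x.
Proof.
under eq_bigr => t _ do rewrite mulr_suml.
rewrite (exchange_big_dep xpredT) //=.
by apply: eq_bigr => x _; rewrite /inv_card_sum mulr_sumr.
Qed.

Lemma sum_ratio_unif_prob_le (phi : {set Omega} -> R) : decomposable phi ->
  \sum_t phi t / unif_prob R t <= #|{set Omega}|%:R.
Proof.
case=> P [[_ P_sum1] phiE].
have -> : \sum_t phi t / unif_prob R t =
          #|Omega|%:R * \sum_(t : {set Omega}) (\sum_(x in t) P x) / #|t|%:R.
  rewrite mulr_sumr; apply: eq_bigr => t _.
  by rewrite phiE /unif_prob invf_div mulrCA mulrA.
rewrite sum_mass_div_card.
suff -> : #|Omega|%:R * \sum_x P x * inv_card_sum x = \sum_y inv_card_sum y.
  exact: sum_inv_card_sum.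
rewrite mulr_natl -sumr_const; apply: eq_bigr => y _.
rewrite -[RHS]mul1r -P_sum1 mulr_suml; apply: eq_bigr => x _.
by rewrite (inv_card_sum_const x y).
Qed.

End SubsetAverage.

Section ActiveInformation.
Context {R : realType} {Omega : finType} (phi : {set Omega} -> R).

Lemma active_infoE (t : {set Omega}) :
  active_info phi t = log2 (phi t / unif_prob R t).
Proof. by rewrite /active_info -log2V invf_div. Qed.

Lemma card_tau_b_le (b : R) : decomposable phi -> 0 < b ->
  powR 2 b * #|tau_b phi b|%:R <= #|{set Omega}|%:R.
Proof.
move=> phi_dec b_gt0; have [P [[P_ge0 _] phiE]] := phi_dec.
have ratio_ge0 t : 0 <= phi t / unif_prob R t.
  by rewrite phiE divr_ge0 ?sumr_ge0 // /unif_prob divr_ge0.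
apply: (le_trans _ (sum_ratio_unif_prob_le phi phi_dec)).
apply: (le_trans _ (markov_card _ (powR 2 b) ratio_ge0)).
rewrite ler_wpM2l ?powR_ge0 // ler_nat; apply: subset_leq_card.
apply/fintype.subsetP => t; rewrite !inE => /andP[_ b_le].
by apply: powR2_le_of_log2_ge; rewrite -?active_infoE.
Qed.

End ActiveInformation.

Theorem theorem2 (R : realType) (Omega : finType) (phi : {set Omega} -> R)
  (hphi : decomposable phi) (b : R) (hb : 3 <= b) :
  #|tau_b phi b|%:R / #|{set Omega}|%:R <= powR 2 (- b).
Proof.
have b_gt0 : 0 < b by apply: lt_le_trans hb.
have pow_gt0 : 0 < powR 2 b by rewrite powR_gt0.
have card_gt0 : 0 < #|{set Omega}|%:R :> R.
  by rewrite ltr0n; apply/card_gt0P; exists finset.set0.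
by rewrite ler_pdivrMr // powRN ler_pdivlMl //; apply: card_tau_b_le.
Qed.
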